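(* Let $\mathcal{F}$ be a $\kappa$-complete filter over $\kappa$ which extends the club filter $\mathcal{D}_\kappa$. If $\mathrm{Gal}(\mathcal{F},\kappa^+,\kappa^{++})$ holds, then $\neg_{\mathrm{st}}\mathrm{Gal}(\mathcal{D}_{\kappa^+},\kappa^+,\kappa^{++})$ fails. In particular, $\mathrm{Gal}(\mathcal{F},\kappa^+,\kappa^+)$ entails the failure of $\neg_{\mathrm{st}}\mathrm{Gal}(\mathcal{D}_{\kappa^+},\kappa^+,\kappa^{++})$.
   Context: $\mathcal{D}_\theta$ is the club filter on $\theta$. $\mathrm{Gal}(\mathcal{F},\mu,\lambda)$: for every $\mathcal{C}\subseteq\mathcal{F}$ with $|\mathcal{C}|=\lambda$ there is $\mathcal{E}\subseteq\mathcal{C}$ with $|\mathcal{E}|=\mu$ and $\bigcap\mathcal{E}\in\mathcal{F}$. $\neg_{\mathrm{st}}\mathrm{Gal}(\mathcal{D}_{\kappa^+},\mu,\lambda)$: there is $\mathcal{C}\subseteq\mathcal{D}_{\kappa^+}$ with $|\mathcal{C}|=\lambda$ such that for every $\mathcal{E}\subseteq\mathcal{C}$ with $|\mathcal{E}|=\mu$, $|\bigcap\mathcal{E}|<\kappa$. *)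

From mathcomp Require Import all_boot.
From mathcomp Require Import boolp classical_sets functions cardinality.
Set Implicit Arguments. Unset Strict Implicit. Unset Printing Implicit Defensive.
Local Open Scope classical_set_scope.
Local Open Scope card_scope.

(* Ordinals and cardinals are modelled as types equipped with a strict
   well-order; cardinality comparisons use mathcomp-analysis' [card_le]
   (existence of an injection) and [card_eq] (existence of a bijection). *)

Definition card_lt T U (A : set T) (B : set U) : Prop :=
  (A #<= B) /\ ~ (B #<= A).

Definition well_order (T : Type) (lt : T -> T -> Prop) : Prop :=
  [/\ (forall x, ~ lt x x),
      (forall x y z, lt x y -> lt y z -> lt x z),
      (forall x y, [\/ lt x y, x = y | lt y x]) &
      well_founded lt].

Definition below (T : Type) (lt : T -> T -> Prop) (a : T) : set T :=
  [set x | lt x a].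

(* (T, lt) is (the order type of) an infinite regular uncountable cardinal:
   an initial ordinal (every proper initial segment has smaller cardinality),
   uncountable, and every unbounded subset has full cardinality. *)
Definition unbounded (T : Type) (lt : T -> T -> Prop) (A : set T) : Prop :=
  forall x, exists2 y, A y & lt x y.

Definition regular_uncountable_cardinal (T : Type) (lt : T -> T -> Prop) : Prop :=
  [/\ well_order lt,
      (forall a : T, card_lt (below lt a) [set: T]),
      ~ ([set: T] #<= [set: nat]) &
      (forall A : set T, unbounded lt A -> [set: T] #<= A)].

(* (U, ltU) is (the order type of) the cardinal successor of |T|:
   every proper initial segment has cardinality <= |T|, the whole has > |T|. *)
Definition successor_cardinal (T U : Type) (ltU : U -> U -> Prop) : Prop :=
  [/\ well_order ltU,
      (forall a : U, below ltU a #<= [set: T]) &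
      card_lt [set: T] [set: U]].

Definition closed_set (T : Type) (lt : T -> T -> Prop) (C : set T) : Prop :=
  forall a, (exists b, lt b a) ->
    (forall b, lt b a -> exists c, [/\ C c, lt b c & lt c a]) -> C a.

Definition club (T : Type) (lt : T -> T -> Prop) (C : set T) : Prop :=
  closed_set lt C /\ unbounded lt C.

Definition club_filter (T : Type) (lt : T -> T -> Prop) : set (set T) :=
  [set A | exists2 C, club lt C & C `<=` A].

Definition is_filter (T : Type) (F : set (set T)) : Prop :=
  [/\ F [set: T], ~ F set0,
      (forall A B, F A -> A `<=` B -> F B) &
      (forall A B, F A -> F B -> F (A `&` B))].

Definition complete_filter (K T : Type) (F : set (set T)) : Prop :=
  forall (I : Type) (f : I -> set T), card_lt [set: I] [set: K] ->
    (forall i, F (f i)) -> F (\bigcap_(i : I) f i).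

(* Gal(F, mu, lambda), with mu = |M| and lambda = |L| *)
Definition Gal (T M L : Type) (F : set (set T)) : Prop :=
  forall C : set (set T), C `<=` F -> C #= [set: L] ->
    exists E : set (set T),
      [/\ E `<=` C, E #= [set: M] & F (\bigcap_(A in E) A)].

(* neg_st Gal(D_{kappa^+}, mu, lambda): D is the club filter on kappa^+
   (type Kp), kappa = |K|, mu = |M|, lambda = |L| *)
Definition neg_st_Gal (K Kp M L : Type) (ltKp : Kp -> Kp -> Prop) : Prop :=
  exists C : set (set Kp),
    [/\ C `<=` club_filter ltKp, C #= [set: L] &
        forall E : set (set Kp), E `<=` C -> E #= [set: M] ->
          card_lt (\bigcap_(A in E) A) [set: K]].

(* For every club X of the family pick a club D included in X and an ordinal
   d < kappa^+ of cofinality kappa that is a limit of D, witnessed by a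
   normal (increasing, continuous) map e from kappa cofinal in d.  There are
   only kappa^+ possible d, so kappa^++ members of the family share the same d,
   and a single e serves for all of them.  By continuity the preimage under e
   of each such member contains a club of kappa, hence lies in F.  Either
   these preimages take kappa^++ values and Gal(F, kappa^+, kappa^++) applies,
   or one value is taken kappa^+ times; in both cases kappa^+ members have
   preimages containing a common F-set G.  Sets in F have size kappa, and e
   maps G injectively into the intersection of those kappa^+ members.
   Gal(F, kappa^+, kappa^+) implies Gal(F, kappa^+, kappa^++) by passing to a
   subfamily, which gives the second claim. *)

From mathcomp Require Import all_boot.
From mathcomp Require Import boolp classical_sets functions cardinality.
From Stdlib Require Import ClassicalEpsilon.
Set Implicit Arguments. Unset Strict Implicit. Unset Printing Implicit Defensive.
Local Open Scope classical_set_scope.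
Local Open Scope card_scope.

(** * Cardinal comparisons *)

Lemma card_le_fun T U (A : set T) (B : set U) (f : T -> U) :
  set_fun A B f -> set_inj A f -> A #<= B.
Proof.
move=> fAB finj; have [g] : $|{injfun A >-> B}| by apply/injfunPex; exists f.
exact: inj_card_le.
Qed.

Lemma card_leP_fun T U (A : set T) (B : set U) a : A #<= B -> A a ->
  exists2 f : T -> U, set_fun A B f & set_inj A f.
Proof.
move=> /card_leP[g] Aa.
pose f x := if pselect (A x) is left Ax then val (g (exist _ x (mem_set Ax)))
            else val (g (exist _ a (mem_set Aa))).
have fE x (Ax : A x) : f x = val (g (exist _ x (mem_set Ax))).
  by rewrite /f; case: pselect => // Ax'; rewrite (Prop_irrelevance Ax' Ax).
exists f => [x Ax|x y /set_mem Ax /set_mem Ay]; rewrite !fE.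
  exact: set_mem (valP _).
by move/val_inj/(inj (f := g) (in_setT _) (in_setT _))/(congr1 val).
Qed.

Lemma card_le_nonempty T U (A : set T) (B : set U) :
  (forall a, A a -> A #<= B) -> A #<= B.
Proof.
move=> AB; have [->|/set0P[a /AB//]] := eqVneq A set0; exact: card_ge0.
Qed.

Lemma card_le_setX T T' U U' (A : set T) (A' : set T') (B : set U) (B' : set U') :
  A #<= A' -> B #<= B' -> A `*` B #<= A' `*` B'.
Proof.
move=> AA' BB'; apply: card_le_nonempty => -[a b] [/= Aa Bb].
have [f fA finj] := card_leP_fun AA' Aa.
have [g gB ginj] := card_leP_fun BB' Bb.
apply: (@card_le_fun _ _ _ _ (fun p => (f p.1, g p.2))).
  by move=> [x y] [/= Ax By]; split; [apply: fA | apply: gB].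
move=> [x y] [x' y'] /set_mem[/= Ax By] /set_mem[/= Ax' By'] [].
by move=> /finj-/(_ (mem_set Ax) (mem_set Ax'))-> /ginj-/(_ (mem_set By) (mem_set By'))->.
Qed.

Lemma card_bigcup_le I T V (D : set I) (S : I -> set T) (Z : set V) :
  (forall i, D i -> S i #<= Z) -> \bigcup_(i in D) S i #<= D `*` Z.
Proof.
move=> SZ; apply: card_le_nonempty => a [i0 Di0 Si0a].
have [f0 _ _] := card_leP_fun (SZ _ Di0) Si0a.
have /choice[idx idxP] : forall x, exists i,
    (\bigcup_(i in D) S i) x -> D i /\ S i x.
  move=> x; have [[i Di Six]|nx] := pselect ((\bigcup_(i in D) S i) x).
    by exists i.
  by exists i0 => /nx.
have /choice[inj injP] : forall i, exists f : T -> V, (exists x, D i /\ S i x) ->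
    set_fun (S i) Z f /\ set_inj (S i) f.
  move=> i; have [[x [Di Six]]|ni] := pselect (exists x, D i /\ S i x).
    by have [f ? ?] := card_leP_fun (SZ _ Di) Six; exists f.
  by exists f0 => /ni.
apply: (@card_le_fun _ _ _ _ (fun x => (idx x, inj (idx x) x))).
  move=> x Ux; have [Di Six] := idxP x Ux; split => //=.
  by have [+ _] := injP _ (ex_intro _ x (conj Di Six)); apply.
move=> x y /set_mem Ux /set_mem Uy [ei].
have [Di Six] := idxP x Ux; have [_ Siy] := idxP y Uy; rewrite -ei in Siy *.
by have [_] := injP _ (ex_intro _ x (conj Di Six)); apply; apply: mem_set.
Qed.

Lemma card_le_exists_subset T U (A : set T) (Y : set U) :
  A #<= Y -> exists2 Z, Z `<=` Y & Z #= A.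
Proof.
move=> AY; have [->|/set0P[a Aa]] := eqVneq A set0.
  by exists set0 => //; apply: card_eq00.
have [f fY finj] := card_leP_fun AY Aa.
by exists (f @` A); [move=> _ [x Ax <-]; apply: fY | apply: inj_card_eq].
Qed.

Lemma infinite_card_setU1 T (A : set T) m :
  [set: nat] #<= A -> A `|` [set m] #<= A.
Proof.
move=> NA; have [Am|nAm] := pselect (A m).
  by apply: subset_card_le => x [//|->].
have [g gA ginj] := card_leP_fun NA (I : [set: nat] 0%N).
have {}ginj : injective g by move=> n k; apply: ginj; rewrite in_setT.
pose shift x := if pselect (range g x) is left gx then g (s2val (cid2 gx)).+1 else x.
have shift_g n : shift (g n) = g n.+1.
  rewrite /shift; case: pselect => [gx|[]]; last by exists n.
  by case: (cid2 gx) => k _ /= /ginj ->.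
have shift_id x : ~ range g x -> shift x = x by rewrite /shift; case: pselect.
pose f x := if pselect (x = m) then g 0%N else shift x.
have fm : f m = g 0%N by rewrite /f; case: pselect.
have fA x : A x -> f x = shift x.
  by move=> Ax; rewrite /f; case: pselect => // xm; case: nAm; rewrite -xm.
apply: (@card_le_fun _ _ _ _ f) => [x [Ax|->]|x y /set_mem[Ax|->] /set_mem[Ay|->]].
- rewrite fA //; have [[n _ <-]|gx] := pselect (range g x).
    by rewrite shift_g; apply: gA.
  by rewrite shift_id.
- by rewrite fm; apply: gA.
- rewrite !fA //.
  have [[n _ <-]|gx] := pselect (range g x); have [[k _ <-]|gy] := pselect (range g y).
  + by rewrite !shift_g => /ginj [->].
  + by rewrite shift_g shift_id // => gn; case: gy; exists n.+1.
  + by rewrite shift_g shift_id // => gk; case: gx; exists k.+1.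
  + by rewrite !shift_id.
- rewrite fm fA //; have [[n _ <-]|gx] := pselect (range g x).
    by rewrite shift_g => /ginj.
  by rewrite shift_id // => x0; case: gx; exists 0%N.
- rewrite fm fA //; have [[n _ <-]|gy] := pselect (range g y).
    by rewrite shift_g => /ginj.
  by rewrite shift_id // => y0; case: gy; exists 0%N.
- by [].
Qed.

Lemma card_le_setU1 T V (A : set T) (Z : set V) m :
  [set: nat] #<= Z -> A #<= Z -> A `|` [set m] #<= Z.
Proof.
move=> NZ AZ; have [finA|/infiniteP NA] := pselect (finite_set A).
  apply: card_le_trans NZ; apply: finite_set_countable.
  by rewrite finite_setU; split => //; apply: finite_set1.
exact: card_le_trans (infinite_card_setU1 _ NA) AZ.
Qed.

Lemma card_le_of_segments X U (R : X -> X -> Prop) (P : set X) (Y : set U) :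
  well_founded R -> (forall p q, P p -> P q -> [\/ R p q, p = q | R q p]) ->
  (forall p, P p -> ~ (Y #<= P `&` [set q | R q p])) -> P #<= Y.
Proof.
move=> Rwf Rtot small; apply: card_le_nonempty => p0 Pp0.
have [Y0|/set0P[y0 _]] := eqVneq Y set0.
  by case: (small p0 Pp0); rewrite Y0; apply: card_ge0.
pose fresh x (rec : forall q, R q x -> U) :=
  epsilon (inhabits y0) (fun u => Y u /\ ~ exists q (h : R q x), P q /\ rec q h = u).
pose f := Fix Rwf (fun _ => U) fresh.
have fE x : f x = fresh x (fun q _ => f q).
  apply: Fix_eq => {}x r1 r2 r12; congr (fresh x _).
  by apply: functional_extensionality_dep => q; apply: functional_extensionality_dep.
have fP p : P p -> Y (f p) /\ ~ exists q (h : R q p), P q /\ f q = f p.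
  move=> Pp; rewrite fE.
  apply: (epsilon_spec (inhabits y0) (fun u => Y u /\ ~ exists q (h : R q p), P q /\ f q = u)).
  apply: contrapT => nu; apply: (small p Pp).
  apply: card_le_trans (card_image_le f _); apply: subset_card_le => u Yu.
  apply: contrapT => nfu; apply: nu; exists u; split => // -[q [h [Pq fqu]]].
  by apply: nfu; exists q.
apply: (@card_le_fun _ _ _ _ f) => [p /fP[]//|p q /set_mem Pp /set_mem Pq fpq].
have [Rpq|//|Rqp] := Rtot p q Pp Pq.
  by have [_ []] := fP q Pq; exists p, Rpq.
by have [_ []] := fP p Pp; exists q, Rqp.
Qed.

(** * Well-orders and Hessenberg's theorem *)

Section WellOrder.
Variables (W : Type) (lt : W -> W -> Prop).
Hypothesis wo : well_order lt.

Lemma wo_irr x : ~ lt x x. Proof. by case: wo. Qed.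
Lemma wo_trans y x z : lt x y -> lt y z -> lt x z.
Proof. by case: wo => _ + _ _; apply. Qed.
Lemma wo_total x y : [\/ lt x y, x = y | lt y x]. Proof. by case: wo. Qed.
Lemma wo_wf : well_founded lt. Proof. by case: wo. Qed.

Definition lte x y := lt x y \/ x = y.

Lemma not_lt_lte x y : ~ lt x y -> lte y x.
Proof. by case: (wo_total x y) => [//|->|]; [right|left]. Qed.

Lemma lte_lt_trans y x z : lte x y -> lt y z -> lt x z.
Proof. by case=> [xy /(wo_trans xy)|->]. Qed.

Lemma lt_lte_trans y x z : lt x y -> lte y z -> lt x z.
Proof. by move=> xy [/(wo_trans xy)|<-]. Qed.

Lemma lte_trans y x z : lte x y -> lte y z -> lte x z.
Proof. by case=> [xy /(lt_lte_trans xy)|->]; [left|]. Qed.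

Lemma wo_least (S : set W) : S !=set0 -> exists2 m, S m & forall s, S s -> ~ lt s m.
Proof.
move=> [x Sx]; apply: contrapT => nm; move: Sx.
elim/(well_founded_induction wo_wf): x => x IH Sx.
by apply: nm; exists x => // s /[swap] /IH.
Qed.

Lemma card_le_below_of_not_ge U (Y : set U) :
  ~ ([set: W] #<= Y) -> exists a, Y #<= below lt a.
Proof.
move=> nWY; apply: contrapT => nY; apply: nWY.
apply: card_le_of_segments wo_wf _ _ => [p q _ _|p _ Yp]; first exact: wo_total.
by apply: nY; exists p; apply: card_le_trans Yp (subset_card_le _) => q [].
Qed.

Lemma exists_gt_of_card (A : set W) m :
  [set: nat] #<= A -> ~ (A #<= below lt m) -> exists2 m', A m' & lt m m'.
Proof.
move=> NA nAm; apply: contrapT => nm.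
have Asub : A `<=` below lt m `|` [set m].
  move=> x Ax; case: (wo_total x m) => [|->|mx]; [by left|by right|].
  by case: nm; exists x.
have Nm : [set: nat] #<= below lt m.
  apply/infiniteP => finm; move/infiniteP: NA; apply.
  by apply: sub_finite_set Asub _; rewrite finite_setU; split => //; apply: finite_set1.
by apply: nAm; apply: card_le_trans (subset_card_le Asub) (card_le_setU1 m Nm (card_lexx _)).
Qed.

End WellOrder.

Section MaxLexOrder.
Variables (W : Type) (lt : W -> W -> Prop).
Hypothesis wo : well_order lt.

Definition maxw (p : W * W) := if pselect (lt p.1 p.2) then p.2 else p.1.

Lemma lte_maxw1 p : lte lt p.1 (maxw p).
Proof. by rewrite /maxw; case: (pselect _) => h; [left|right]. Qed.

Lemma lte_maxw2 p : lte lt p.2 (maxw p).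
Proof. by rewrite /maxw; case: (pselect _) => h /=; [right | exact: not_lt_lte h]. Qed.

Lemma maxw_lt p a : lt p.1 a -> lt p.2 a -> lt (maxw p) a.
Proof. by rewrite /maxw; case: (pselect _). Qed.

(* Goedel's well-ordering of pairs, as in Hessenberg's proof of kappa * kappa = kappa. *)
Definition lt_maxlex (p q : W * W) :=
  lt (maxw p) (maxw q) \/
  maxw p = maxw q /\ (lt p.1 q.1 \/ p.1 = q.1 /\ lt p.2 q.2).

Lemma lt_maxlex_wf : well_founded lt_maxlex.
Proof.
move=> [a b]; suff : forall m a b, maxw (a, b) = m -> Acc lt_maxlex (a, b) by apply.
move=> m; elim/(well_founded_induction (wo_wf wo)): m => m IHm.
move=> {}a; elim/(well_founded_induction (wo_wf wo)): a => a IHa.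
move=> {}b; elim/(well_founded_induction (wo_wf wo)): b => b IHb mab.
constructor => -[c d]; rewrite /lt_maxlex mab /= => -[cdm|[cdm [ca|[ca db]]]].
- exact: IHm cdm _ _ erefl.
- exact: IHa c ca d cdm.
- by rewrite ca in cdm *; exact: IHb d db cdm.
Qed.

Lemma lt_maxlex_total p q : [\/ lt_maxlex p q, p = q | lt_maxlex q p].
Proof.
case: p q => [a b] [c d]; rewrite /lt_maxlex /=.
case: (wo_total wo (maxw (a, b)) (maxw (c, d))) => [lt_m|eq_m|lt_m].
- by apply: Or31; left.
- rewrite eq_m; case: (wo_total wo a c) => [ac|<-|ca].
  + by apply: Or31; right; split; [|left].
  + case: (wo_total wo b d) => [bd|<-|db].
    * by apply: Or31; right; split; [|right].
    * exact: Or32.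
    * by apply: Or33; right; split; [|right].
  + by apply: Or33; right; split; [|left].
- by apply: Or33; left.
Qed.

Lemma lt_maxlex_maxw q p : lt_maxlex q p -> lte lt (maxw q) (maxw p).
Proof. by case=> [|[]]; [left|right]. Qed.

Notation B := (below lt).

Lemma card_initial_square a : [set: nat] #<= B a ->
  (forall b, lt b a -> ~ (B a #<= B b)) ->
  (forall b, lt b a -> [set: nat] #<= B b -> B b `*` B b #<= B b) ->
  B a `*` B a #<= B a.
Proof.
move=> Na initial IH.
apply: card_le_of_segments lt_maxlex_wf _ _ => [p q _ _|p [/= pa1 pa2] le_pred].
  exact: lt_maxlex_total.
have [m' m'a mm'] := exists_gt_of_card wo Na (initial _ (maxw_lt pa1 pa2)).
have pred_sub : (B a `*` B a) `&` [set q | lt_maxlex q p] `<=` B m' `*` B m'.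
  move=> q [_ /lt_maxlex_maxw qp].
  by split; apply: (lte_lt_trans wo _ mm'); apply: (lte_trans wo _ qp);
    [apply: lte_maxw1 | apply: lte_maxw2].
have {}le_pred := card_le_trans le_pred (subset_card_le pred_sub).
have [Nm'|finm'] := pselect ([set: nat] #<= B m').
  by apply: (initial m' m'a); apply: card_le_trans le_pred (IH m' m'a Nm').
move/infiniteP: Na; apply; apply: card_le_finite le_pred _.
by apply: finite_setX; apply/finite_setPn.
Qed.

Lemma card_below_square a : [set: nat] #<= B a -> B a `*` B a #<= B a.
Proof.
elim/(well_founded_induction (wo_wf wo)): a => a IH Na.
have [a' Ba'a min_a'] := wo_least wo (ex_intro (fun x => B x #= B a) a (card_eqxx _)).
have a'a : lte lt a' a := not_lt_lte wo (min_a' a (card_eqxx _)).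
have [a'_le_a a_le_a'] := (card_eqPle _ _).1 Ba'a.
have Na' : [set: nat] #<= B a' by apply: card_le_trans Na a_le_a'.
suff sq_a' : B a' `*` B a' #<= B a'.
  apply: card_le_trans (card_le_setX a_le_a' a_le_a') _.
  exact: card_le_trans sq_a' a'_le_a.
apply: card_initial_square Na' _ _ => [b ba' a'b|b ba'].
  apply: (min_a' b _ ba'); apply: card_eq_trans _ Ba'a; apply: Cantor_Bernstein a'b.
  by apply: subset_card_le => x xb; exact: (wo_trans wo xb ba').
exact: (IH b (lt_lte_trans wo ba' a'a)).
Qed.

End MaxLexOrder.

(* Adjoining a top element [None] makes all of [T] an initial segment. *)
Definition lt_top T (lt : T -> T -> Prop) (x y : option T) :=
  match x, y with
  | Some a, Some b => lt a b
  | Some _, None => True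
  | None, _ => False
  end.

Lemma lt_top_wo T (lt : T -> T -> Prop) : well_order lt -> well_order (lt_top lt).
Proof.
move=> wo; split.
- by move=> [a|] //=; apply: wo_irr.
- by move=> [a|] [b|] [c|] //= ab; apply: wo_trans.
- move=> [a|] [b|] /=; [|exact: Or31|exact: Or33|exact: Or32].
  by case: (wo_total wo a b) => [ab|->|ba]; [exact: Or31|exact: Or32|exact: Or33].
- have AccS a : Acc (lt_top lt) (Some a).
    elim/(well_founded_induction (wo_wf wo)): a => a IH.
    by constructor => -[b|] /=; [apply: IH | case].
  by case=> [a|]; [exact: AccS | constructor => -[b _|[]]; exact: AccS].
Qed.

Lemma card_square T (lt : T -> T -> Prop) : well_order lt ->
  [set: nat] #<= [set: T] -> [set: T] `*` [set: T] #<= [set: T].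
Proof.
move=> wo NT.
have belowE : below (lt_top lt) None = some @` [set: T].
  by apply/seteqP; split => [[a _|[]]|_ [a _ <-]] //; exists a.
have T_below : [set: T] #= below (lt_top lt) None by rewrite belowE card_eq_sym card_some.
have [T_le_below below_le_T] := (card_eqPle _ _).1 T_below.
apply: card_le_trans (card_le_setX T_le_below T_le_below) _.
apply: card_le_trans _ below_le_T.
by have := card_below_square (lt_top_wo wo) (card_le_trans NT T_le_below).
Qed.

(** * Successor cardinals, clubs and normal maps *)

Section SuccessorCardinal.
Variables (T U : Type) (ltU : U -> U -> Prop).
Hypothesis hU : successor_cardinal T ltU.

Lemma successor_card_ge V (Y : set V) : ~ (Y #<= [set: T]) -> [set: U] #<= Y.
Proof.
case: hU => woU below_le _ nYT; apply: contrapT => /(card_le_below_of_not_ge woU)[a].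
by move=> /card_le_trans/(_ (below_le a)).
Qed.

Lemma card_fiber_ge A J (X : set A) (I : set J) (f : A -> J) :
  set_fun X I f -> ~ (X #<= I `*` [set: T]) ->
  exists2 i, I i & [set: U] #<= X `&` f @^-1` [set i].
Proof.
move=> fXI nXIT; apply: contrapT => nfib; apply: nXIT.
have Xsub : X `<=` \bigcup_(i in I) (X `&` f @^-1` [set i]).
  by move=> x Xx; exists (f x); [apply: fXI | split].
apply: card_le_trans (subset_card_le Xsub) (card_bigcup_le _) => i Ii.
by apply: contrapT => /successor_card_ge fib; apply: nfib; exists i.
Qed.

End SuccessorCardinal.

Definition limit_ordinal T (lt : T -> T -> Prop) (x : T) :=
  (exists y, lt y x) /\ forall y, lt y x -> exists2 z, lt y z & lt z x.

Definition cofinal_below T (lt : T -> T -> Prop) (C : set T) (d : T) :=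
  forall b, lt b d -> exists c, [/\ C c, lt b c & lt c d].

Definition normal_cofinal K Kp (ltK : K -> K -> Prop) (ltKp : Kp -> Kp -> Prop)
    (d : Kp) (e : K -> Kp) :=
  [/\ forall x y, ltK x y -> ltKp (e x) (e y),
      forall x, ltKp (e x) d,
      forall b, ltKp b d -> exists x, ltKp b (e x) &
      forall x, limit_ordinal ltK x ->
        forall b, ltKp b (e x) -> exists2 y, ltK y x & ltKp b (e y)].

Section KappaAndSuccessor.
Variables (K : Type) (ltK : K -> K -> Prop) (Kp : Type) (ltKp : Kp -> Kp -> Prop).
Hypotheses (hK : regular_uncountable_cardinal ltK) (hKp : successor_cardinal K ltKp).

Let woK : well_order ltK. Proof. by case: hK. Qed.
Let woKp : well_order ltKp. Proof. by case: hKp. Qed.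

Lemma infinite_kappa : [set: nat] #<= [set: K].
Proof.
case: hK => _ _ nc _; apply/infiniteP => fin; apply: nc.
exact: finite_set_countable.
Qed.

Lemma kappa_le_succ : [set: K] #<= [set: Kp].
Proof. by case: hKp => _ _ []. Qed.

Lemma card_kappa_square : [set: K] `*` [set: K] #<= [set: K].
Proof. exact: card_square woK infinite_kappa. Qed.

Lemma card_kappa_succ_square : [set: Kp] `*` [set: Kp] #<= [set: Kp].
Proof. exact: card_square woKp (card_le_trans infinite_kappa kappa_le_succ). Qed.

Lemma kappa_no_max x : exists y, ltK x y.
Proof.
case: hK => _ /(_ x)[_ nKx] _ _.
by have [y _ xy] := exists_gt_of_card woK infinite_kappa nKx; exists y.
Qed.

Lemma club_tail x : club ltK [set y | ltK x y].
Proof.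
split=> [a [b0 b0a] tail_a|y].
  by have [c [xc _ ca]] := tail_a b0 b0a; apply: (wo_trans woK xc ca).
have [m xm ym] : exists2 m, lte ltK x m & lte ltK y m.
  case: (wo_total woK x y) => [xy|->|yx]; first by exists y; [left|right].
    by exists y; right.
  by exists x; [right|left].
have [z mz] := kappa_no_max m.
by exists z; [apply: (lte_lt_trans woK xm mz) | apply: (lte_lt_trans woK ym mz)].
Qed.

Lemma kappa_countable_bounded (g : nat -> K) : exists u, forall n, ltK (g n) u.
Proof.
apply: contrapT => nb; case: hK => _ _ + unb_full; apply.
apply: card_le_trans (card_image_le g _); apply: unb_full => y.
have [y' yy'] := kappa_no_max y; apply: contrapT => nq; apply: nb; exists y' => n.
case: (wo_total woK (g n) y') => [//|gny'|y'gn]; case: nq; exists (g n);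
  try by exists n.
- by rewrite gny'.
- exact: (wo_trans woK yy' y'gn).
Qed.

Lemma kappa_succ_inhabited : inhabited Kp.
Proof.
case: hKp => _ _ [_]; apply: contra_notP => nKp.
by apply: card_le_nonempty => p; case: nKp; constructor.
Qed.

Lemma kappa_succ_bounded (S : set Kp) : S #<= [set: K] -> exists u, forall s, S s -> ltKp s u.
Proof.
move=> SK; apply: contrapT => nb; case: hKp => _ below_le [_]; apply.
have cover : [set: Kp] `<=` \bigcup_(s in S) (below ltKp s `|` [set s]).
  move=> x _; apply: contrapT => nx; apply: nb; exists x => s Ss.
  by case: (wo_total woKp s x) => [//|sx|xs]; case: nx; exists s => //; [right|left].
apply: card_le_trans (subset_card_le cover) _.
apply: card_le_trans (card_bigcup_le (Z := [set: K]) _) _ => [s _|].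
  exact: card_le_setU1 infinite_kappa (below_le s).
exact: card_le_trans (card_le_setX SK (card_lexx _)) card_kappa_square.
Qed.

Lemma normal_cofinal_lt d e x y :
  normal_cofinal ltK ltKp d e -> ltKp (e x) (e y) -> ltK x y.
Proof.
move=> [incr _ _ _] exy; case: (wo_total woK x y) => [//|xy|yx].
  by rewrite xy in exy; case: (wo_irr woKp exy).
by case: (wo_irr woKp (wo_trans woKp exy (incr _ _ yx))).
Qed.

Lemma normal_cofinal_inj d e : normal_cofinal ltK ltKp d e -> injective e.
Proof.
move=> [incr _ _ _] x y exy.
by case: (wo_total woK x y) => [/incr|//|/incr]; rewrite exy => /(wo_irr woKp).
Qed.

Lemma increasing_seq_sup (xs : nat -> K) : (forall n, ltK (xs n) (xs n.+1)) ->
  exists z, [/\ limit_ordinal ltK z, forall n, ltK (xs n) z &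
                forall y, ltK y z -> exists n, ltK y (xs n)].
Proof.
move=> incr; have [u ub] := kappa_countable_bounded xs.
have [z zub zmin] := wo_least woK (ex_intro (fun z => forall n, ltK (xs n) z) u ub).
have below_z y : ltK y z -> exists n, ltK y (xs n).
  move=> yz; apply: contrapT => ny; apply: (zmin y) => // n.
  have /(not_lt_lte woK) yn : ~ ltK y (xs n.+1) by move=> yn; apply: ny; exists n.+1.
  exact: (lt_lte_trans woK (incr n) yn).
exists z; split => //; split; first by exists (xs 0%N).
by move=> y /below_z[n yn]; exists (xs n).
Qed.

Section NormalPreimage.
Variables (d : Kp) (e : K -> Kp) (C : set Kp).
Hypotheses (ne : normal_cofinal ltK ltKp d e) (clubC : club ltKp C)
  (Cd : cofinal_below ltKp C d).

Lemma normal_preimage_closed : closed_set ltK [set x | C (e x)].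
Proof.
have [incr _ _ cont] := ne; have [closedC _] := clubC.
move=> a [b0 b0a] Ca; apply: closedC; first by exists (e b0); apply: incr.
have lim_a : limit_ordinal ltK a.
  by split; [exists b0 | move=> y /Ca[c [_ yc ca]]; exists c].
move=> b /(cont _ lim_a)[y ya bey]; have [c [Cc yc ca]] := Ca y ya.
by exists (e c); split => //; [exact: (wo_trans woKp bey (incr _ _ yc)) | apply: incr].
Qed.

Lemma normal_preimage_unbounded : unbounded ltK [set x | C (e x)].
Proof.
have [incr below_d cof cont] := ne; have [closedC _] := clubC.
move=> x.
have /choice[pickC pickCP] : forall b, exists c, ltKp b d -> [/\ C c, ltKp b c & ltKp c d].
  move=> b; have [/Cd[c cP]|nbd] := pselect (ltKp b d); first by exists c.
  by exists b => /nbd.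
have /choice[pickX pickXP] : forall b, exists y, ltKp b d -> ltKp b (e y).
  move=> b; have [/cof[y bey]|nbd] := pselect (ltKp b d); first by exists y.
  by exists x => /nbd.
pose xs := fix xs n := if n is n'.+1 then pickX (pickC (e (xs n'))) else x.
pose cs n := pickC (e (xs n)).
have csP n : [/\ C (cs n), ltKp (e (xs n)) (cs n) & ltKp (cs n) (e (xs n.+1))].
  have [Ccs ecs csd] := pickCP _ (below_d (xs n)).
  by split => //; apply: pickXP.
have xs_incr n : ltK (xs n) (xs n.+1).
  by have [_ ecs cse] := csP n; apply: (normal_cofinal_lt ne (wo_trans woKp ecs cse)).
have [z [lim_z xs_z below_z]] := increasing_seq_sup xs_incr.
exists z; last exact: xs_z 0%N.
apply: closedC; first by exists (e (xs 0%N)); apply: incr.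
move=> b /(cont _ lim_z)[y /below_z[n yxs] bey].
have [Ccs ecs cse] := csP n; exists (cs n); split => //.
  exact: (wo_trans woKp bey (wo_trans woKp (incr _ _ yxs) ecs)).
exact: (wo_trans woKp cse (incr _ _ (xs_z n.+1))).
Qed.

Lemma club_normal_preimage : club ltK [set x | C (e x)].
Proof. by split; [apply: normal_preimage_closed | apply: normal_preimage_unbounded]. Qed.

End NormalPreimage.

Lemma club_enumeration (D : set Kp) : unbounded ltKp D ->
  exists e : K -> Kp, [/\ forall x, D (e x),
    forall x y, ltK x y -> ltKp (e x) (e y) &
    forall x c, D c -> (forall y, ltK y x -> ltKp (e y) c) -> ~ ltKp c (e x)].
Proof.
move=> unbD; have [p0] := kappa_succ_inhabited.
pose next x (rec : forall y, ltK y x -> Kp) := epsilon (inhabits p0) (fun c =>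
  D c /\ (forall y (h : ltK y x), ltKp (rec y h) c) /\
  forall c', D c' -> (forall y (h : ltK y x), ltKp (rec y h) c') -> ~ ltKp c' c).
pose e := Fix (wo_wf woK) (fun _ => Kp) next.
have eE x : e x = next x (fun y _ => e y).
  apply: Fix_eq => {}x f g fg; congr (next x _).
  by apply: functional_extensionality_dep => y; apply: functional_extensionality_dep.
suff eP x : D (e x) /\ (forall y, ltK y x -> ltKp (e y) (e x)) /\
    forall c, D c -> (forall y, ltK y x -> ltKp (e y) c) -> ~ ltKp c (e x).
  exists e; split=> [x|x y xy|x]; first by case: (eP x).
    by case: (eP y) => _ [/(_ x xy)].
  by case: (eP x) => _ [].
rewrite eE; apply: (epsilon_spec (inhabits p0) (fun c => D c /\
  (forall y, ltK y x -> ltKp (e y) c) /\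
  forall c', D c' -> (forall y, ltK y x -> ltKp (e y) c') -> ~ ltKp c' c)).
have below_le : below ltK x #<= [set: K] by case: hK => _ /(_ x)[].
have [u ub] := kappa_succ_bounded (card_le_trans (card_image_le e _) below_le).
have [c Dc uc] := unbD u.
have [m [Dm m_ub] m_min] := wo_least woKp (ex_intro
  (fun c => D c /\ forall y, ltK y x -> ltKp (e y) c) c
  (conj Dc (fun y yx => wo_trans woKp (ub _ (ex_intro2 _ _ y yx erefl)) uc))).
exists m; split => //; split => // c' Dc' c'_ub c'm.
by apply: (m_min c') => //; split.
Qed.

Section ClubEnumeration.
Variables (D : set Kp) (e : K -> Kp).
Hypotheses (closedD : closed_set ltKp D) (eD : forall x, D (e x))
  (incr : forall x y, ltK x y -> ltKp (e x) (e y))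
  (e_least : forall x c, D c -> (forall y, ltK y x -> ltKp (e y) c) -> ~ ltKp c (e x)).

Lemma enumeration_continuous x : limit_ordinal ltK x ->
  forall b, ltKp b (e x) -> exists2 y, ltK y x & ltKp b (e y).
Proof.
move=> [[y0 y0x] lim_x] b bex; apply: contrapT => nb.
have le_b y : ltK y x -> lte ltKp (e y) b.
  by move=> yx; apply: (not_lt_lte woKp) => bey; apply: nb; exists y.
have [s s_ub s_min] := wo_least woKp
  (ex_intro (fun s => forall y, ltK y x -> lte ltKp (e y) s) b le_b).
have lt_s y : ltK y x -> ltKp (e y) s.
  by move=> yx; have [z yz zx] := lim_x y yx; apply: (lt_lte_trans woKp (incr yz) (s_ub z zx)).
have Ds : D s.
  apply: closedD; first by exists (e y0); apply: lt_s.
  move=> b' b's; have [y yx b'ey] : exists2 y, ltK y x & ltKp b' (e y).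
    apply: contrapT => nn; apply: (s_min b') => // y yx.
    by apply: (not_lt_lte woKp) => b'ey; apply: nn; exists y.
  have [z yz zx] := lim_x y yx.
  by exists (e z); split; [|apply: (wo_trans woKp b'ey (incr yz))|apply: lt_s].
apply: (e_least Ds lt_s).
exact: (lte_lt_trans woKp (not_lt_lte woKp (s_min b le_b)) bex).
Qed.

Lemma enumeration_normal_cofinal :
  exists d, normal_cofinal ltK ltKp d e /\ cofinal_below ltKp D d.
Proof.
have [u ub] := kappa_succ_bounded (card_image_le e [set: K]).
have [d d_ub d_min] := wo_least woKp
  (ex_intro (fun d => forall x, ltKp (e x) d) u (fun x => ub _ (imageT e x))).
have cof b : ltKp b d -> exists x, ltKp b (e x).
  move=> bd; apply: contrapT => nb; apply: (d_min b) => // x.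
  have [x' xx'] := kappa_no_max x.
  have /(not_lt_lte woKp) ex'b : ~ ltKp b (e x') by move=> bex'; apply: nb; exists x'.
  exact: (lt_lte_trans woKp (incr xx') ex'b).
exists d; split; first by split => //; apply: enumeration_continuous.
by move=> b /cof[x bex]; exists (e x).
Qed.

End ClubEnumeration.

Lemma club_normal_cofinal (D : set Kp) : club ltKp D ->
  exists d e, normal_cofinal ltK ltKp d e /\ cofinal_below ltKp D d.
Proof.
move=> [closedD /club_enumeration[e [eD incr e_least]]].
by have [d ?] := enumeration_normal_cofinal closedD eD incr e_least; exists d, e.
Qed.

End KappaAndSuccessor.

Lemma Gal_card_le T M L L' (F : set (set T)) :
  [set: L] #<= [set: L'] -> @Gal T M L F -> @Gal T M L' F.
Proof.
move=> LL' GalL C CF /(card_eqPle _ _)[_ L'C].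
have [Z ZC ZL] := card_le_exists_subset (card_le_trans LL' L'C).
have [E [EZ EM FE]] := GalL Z (subset_trans ZC CF) ZL.
by exists E; split => //; apply: subset_trans ZC.
Qed.

Section Proposition.
Variables (K : Type) (ltK : K -> K -> Prop) (Kp : Type) (ltKp : Kp -> Kp -> Prop)
  (Kpp : Type) (ltKpp : Kpp -> Kpp -> Prop).
Hypotheses (hK : regular_uncountable_cardinal ltK) (hKp : successor_cardinal K ltKp)
  (hKpp : successor_cardinal Kp ltKpp).
Variable F : set (set K).
Hypotheses (hF : is_filter F) (hFD : club_filter ltK `<=` F).

Lemma not_succ2_le_succ V (X : set V) : X #= [set: Kpp] -> ~ (X #<= [set: Kp]).
Proof.
move=> /(card_eqPle _ _)[_ KppX] XKp; case: hKpp => _ _ [_]; apply.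
exact: card_le_trans KppX XKp.
Qed.

Lemma kappa_le_filter_set G : F G -> [set: K] #<= G.
Proof.
move=> FG; case: hK => _ _ _; apply=> x; apply: contrapT => nGx.
have [_ F0 _ FI] := hF; apply: F0.
have -> : set0 = G `&` [set y | ltK x y].
  by apply/seteqP; split => // y [Gy xy]; apply: nGx; exists y.
by apply: FI => //; apply: hFD; exists [set y | ltK x y]; [apply: club_tail|].
Qed.

Lemma succ2_large_fiber A (X : set A) (f : A -> Kp) :
  X #= [set: Kpp] -> exists d, [set: Kpp] #<= X `&` f @^-1` [set d].
Proof.
move=> XKpp; have [|d _ fib] := @card_fiber_ge _ _ _ hKpp _ _ X [set: Kp] f (fun _ _ => I).
  move=> XKp2; apply: (not_succ2_le_succ XKpp).
  exact: card_le_trans XKp2 (card_kappa_succ_square hK hKp).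
by exists d.
Qed.

Lemma Gal_common_subset A (S : set A) (g : A -> set K) :
  @Gal K Kp Kpp F -> S #= [set: Kpp] -> (forall X, S X -> F (g X)) ->
  exists E, [/\ E `<=` S, E #= [set: Kp] & exists2 G, F G & forall X, E X -> G `<=` g X].
Proof.
move=> GalF SKpp gF.
suff [E' [E'S KpE' [G FG GE']]] : exists E', [/\ E' `<=` S, [set: Kp] #<= E' &
    exists2 G, F G & forall X, E' X -> G `<=` g X].
  have [E EE' EKp] := card_le_exists_subset KpE'.
  by exists E; split => //; [apply: subset_trans EE' E'S | exists G => // X /EE'/GE'].
have /(card_eqPle _ _)[S_le_Kpp _] := SKpp.
have [Kpp_img|small_img] := pselect ([set: Kpp] #<= g @` S).
  have imgKpp : g @` S #= [set: Kpp].
    exact: Cantor_Bernstein (card_le_trans (card_image_le g S) S_le_Kpp) Kpp_img.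
  have imgF : g @` S `<=` F by move=> _ [X SX <-]; apply: gF.
  have [E'' [E''img /(card_eqPle _ _)[_ Kp_le_E''] FE'']] := GalF _ imgF imgKpp.
  exists (S `&` g @^-1` E''); split; first by move=> X [].
    apply: card_le_trans Kp_le_E'' (card_le_trans _ (card_image_le g _)).
    apply: subset_card_le => B E''B; have [X SX gXB] := E''img B E''B.
    by exists X => //; split; rewrite //= gXB.
  by exists (\bigcap_(B in E'') B) => // X [_ E''gX] x /(_ _ E''gX).
have img_le : g @` S #<= [set: Kp].
  by apply: contrapT => /(successor_card_ge hKpp).
have gS : set_fun S (g @` S) g by move=> X SX; exists X.
have S_big : ~ (S #<= g @` S `*` [set: K]).
  move=> S_le; apply: (not_succ2_le_succ SKpp); apply: card_le_trans S_le _.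
  apply: card_le_trans (card_le_setX img_le (kappa_le_succ hKp)) _.
  exact: card_kappa_succ_square hK hKp.
have [B [X SX <-] Kp_le_fib] := card_fiber_ge hKp gS S_big.
exists (S `&` g @^-1` [set g X]); split; [by move=> Y [] | by [] |].
by exists (g X); [apply: gF | move=> Y [_ ->]].
Qed.

Lemma Gal_not_neg_st_Gal : @Gal K Kp Kpp F -> ~ @neg_st_Gal K Kp Kp Kpp ltKp.
Proof.
move=> GalF [C [CD CKpp C_small]].
have /choice[dX dXP] : forall X, exists d, C X ->
    (exists e, normal_cofinal ltK ltKp d e) /\
    exists2 D, club ltKp D & D `<=` X /\ cofinal_below ltKp D d.
  move=> X; have [/CD[D clubD DX]|nCX] := pselect (C X).
    have [d [e [ne Dd]]] := club_normal_cofinal hK hKp clubD.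
    by exists d => _; split; [exists e | exists D].
  by have [d0] := kappa_succ_inhabited hKp; exists d0.
have [d Kpp_le_S] := succ2_large_fiber dX CKpp.
pose S := C `&` dX @^-1` [set d].
have SKpp : S #= [set: Kpp].
  apply: Cantor_Bernstein Kpp_le_S; apply: card_le_trans (subset_card_le (@subIsetl _ _ _)) _.
  by case/(card_eqPle _ _): CKpp.
have [X0 [CX0 dX0]] : S !=set0.
  apply/set0P/eqP => S0; apply: (not_succ2_le_succ SKpp).
  by rewrite S0; apply: card_ge0.
have [[e ne] _] := dXP X0 CX0; rewrite dX0 in ne.
have gF X : S X -> F [set x | X (e x)].
  move=> [CX dXd]; have [_ [D clubD [DX Dd]]] := dXP X CX; rewrite dXd in Dd.
  apply: hFD; exists [set x | D (e x)]; last by move=> x /DX.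
  exact: (club_normal_preimage hK hKp ne clubD Dd).
have [E [ES EKp [G FG GE]]] := Gal_common_subset GalF SKpp gF.
have [_] := C_small E (subset_trans ES (@subIsetl _ _ _)) EKp; apply.
apply: card_le_trans (kappa_le_filter_set FG) _.
have eG : e @` G #= G := inj_card_eq (in2W (normal_cofinal_inj hK hKp ne)).
apply: card_le_trans (proj2 ((card_eqPle _ _).1 eG)) (subset_card_le _).
by move=> _ [x Gx <-] X EX; apply: GE.
Qed.

End Proposition.

Theorem proposition6p4
    (K : Type) (ltK : K -> K -> Prop)
    (Kp : Type) (ltKp : Kp -> Kp -> Prop)
    (Kpp : Type) (ltKpp : Kpp -> Kpp -> Prop)
    (hK : regular_uncountable_cardinal ltK)
    (hKp : successor_cardinal K ltKp)
    (hKpp : successor_cardinal Kp ltKpp)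
    (F : set (set K))
    (hF : is_filter F)
    (hFc : complete_filter K F)
    (hFD : club_filter ltK `<=` F) :
  (@Gal K Kp Kpp F -> ~ @neg_st_Gal K Kp Kp Kpp ltKp) /\
  (@Gal K Kp Kp F -> ~ @neg_st_Gal K Kp Kp Kpp ltKp).
Proof.
have main := Gal_not_neg_st_Gal hK hKp hKpp hF hFD.
by split=> // /(Gal_card_le (kappa_le_succ hKpp))/main.
Qed.
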